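(* Let $L\subset\mathbb{R}$ be a Galois extension of $\mathbb{Q}$ with cyclic Galois group of order $4$, let $l$ be its unique quadratic subfield with fundamental unit $u_l>1$, and suppose that there is no $u\in\mathcal{O}_L^*$ with $N_{L/l}(u)=\pm u_l$ (equivalently, $\mathcal{O}_L^*$ is generated by $\mathcal{O}_l^*$ together with the relative units $\{w\in\mathcal{O}_L^*: N_{L/l}(w)=\pm1\}$). Then every nonzero $w\in\bigwedge^2\operatorname{LOG}(\mathcal{O}_L^* )$ satisfies $$\|w\|_1\ge 8\log\!\left(\tfrac{1+\sqrt5}{2}\right)^2.$$
   Context: For a totally real number field $L$, $\operatorname{LOG}:\mathcal{O}_L^*\to\mathbb{R}^{\mathcal{A}_L}$, $\operatorname{LOG}(\gamma)=(\log|\tau(\gamma)|)_\tau$, indexed by the real embeddings $\tau$ of $L$. With the standard orthonormal basis $\{\delta^v\}$ of $\mathbb{R}^{\mathcal{A}_L}$ and $\delta^I=\delta^{v_1}\wedge\cdots\wedge\delta^{v_j}$ for $j$-subsets $I$, the 1-norm of $w=\sum_I c_I\delta^I\in\bigwedge^j\mathbb{R}^{\mathcal{A}_L}$ is $\|w\|_1=\sum_I|c_I|$. $\bigwedge^2\operatorname{LOG}(\mathcal{O}_L^* )$ is the subgroup generated by all $\operatorname{LOG}(a)\wedge\operatorname{LOG}(b)$ with $a,b\in\mathcal{O}_L^*$. *)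

From HB Require Import structures.
From mathcomp Require Import all_boot all_order all_algebra all_fingroup all_solvable all_field.
From mathcomp Require Import all_classical all_reals.
From mathcomp Require Import exp.
Set Implicit Arguments. Unset Strict Implicit. Unset Printing Implicit Defensive.
Import Order.TTheory GRing.Theory Num.Theory.
Local Open Scope ring_scope.
Local Open Scope classical_set_scope.

Section Defs.
Variables (L : fieldExtType rat) (R : realType).

Definition alg_int (x : L) : Prop :=
  exists p : {poly int}, p \is monic /\ root (map_poly (fun z : int => z%:~R) p) x.

Definition OL_unit (x : L) : Prop := alg_int x /\ x != 0 /\ alg_int x^-1.

Definition real_emb (f : L -> R) : Prop :=
  [/\ forall x y, f (x + y) = f x + f y,
      forall x y, f (x * y) = f x * f y & f 1 = 1].

Definition LOG (a : L) : (L -> R) -> R := fun f => ln `|f a|.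

(* Elements of /\^2 R^{A_L} are represented by their (antisymmetric) coefficient
   function: w tau sigma = coefficient of delta^tau /\ delta^sigma. *)
Definition wedge2 (x y : (L -> R) -> R) : (L -> R) -> (L -> R) -> R :=
  fun f g => x f * y g - x g * y f.

Inductive wedge2_LOG_group : ((L -> R) -> (L -> R) -> R) -> Prop :=
| w2_zero : wedge2_LOG_group (fun _ _ => 0)
| w2_gen a b : OL_unit a -> OL_unit b -> wedge2_LOG_group (wedge2 (LOG a) (LOG b))
| w2_sub w1 w2 : wedge2_LOG_group w1 -> wedge2_LOG_group w2 ->
    wedge2_LOG_group (fun f g => w1 f g - w2 f g).

Definition emb_pairs : set ((L -> R) * (L -> R)) :=
  [set p | real_emb p.1 /\ real_emb p.2 /\ p.1 <> p.2].

(* 1-norm: sum over 2-subsets {tau, sigma} of |c_{tau,sigma}|, i.e. half the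
   sum over ordered pairs of distinct embeddings *)
Definition wedge_norm1 (w : (L -> R) -> (L -> R) -> R) : R :=
  (\sum_(p \in emb_pairs) `|w p.1 p.2|) / 2.

Definition wedge_nonzero (w : (L -> R) -> (L -> R) -> R) : Prop :=
  exists f g, real_emb f /\ real_emb g /\ w f g != 0.

End Defs.

(* Let [s] generate [Gal(L/Q)], so that the real embeddings are the
   [tau k = iota \o s^k], [k < 4].  As no unit has relative norm [+-u_l], every
   unit is [u_l^m r] with [N_{L/l} r = +-1], and then
   [LOG r = a (1,0,-1,0) + b (0,1,0,-1)] while [LOG u_l = c (1,-1,1,-1)] with
   [c = log u_l].  The pairs [(a, b)] form a lattice stable under the rotation
   induced by [s], i.e. a [Z[i]]-module [Z[i] g]; hence every element of
   [/\^2 LOG(O_L^* )] is [c E /\ (a U + b V) + T U /\ V] with [(a, b)] in the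
   lattice and [T] an integer multiple of [|g|^2].  Schinzel's argument
   ([N_{L/Q}(r - r^-1)] is a nonzero integer) gives [|a| + |b| >= 2 log phi] on
   nonzero lattice points and [c >= log phi], and the 1-norm of such a form is
   then at least [8 (log phi)^2]. *)

From HB Require Import structures.
From mathcomp Require Import all_boot all_order all_algebra all_fingroup all_solvable all_field.
From mathcomp Require Import all_classical all_reals.
From mathcomp Require Import exp.
From mathcomp Require Import ring lra zify.
Import Order.TTheory GRing.Theory Num.Theory.
Local Open Scope ring_scope.
Set Implicit Arguments. Unset Strict Implicit. Unset Printing Implicit Defensive.

Section AlgebraicIntegers.
Variable L : fieldExtType rat.

Lemma alg_intE (x : L) : alg_int x <-> integralOver (intr : int -> L) x.
Proof. by split=> [[p [mp rp]]|[p mp rp]]; exists p. Qed.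

Lemma alg_int1 : alg_int (1 : L).
Proof. exact/alg_intE/integral1. Qed.

Lemma alg_intM (x y : L) : alg_int x -> alg_int y -> alg_int (x * y).
Proof. by move=> /alg_intE hx /alg_intE hy; apply/alg_intE/integral_mul. Qed.

Lemma alg_intB (x y : L) : alg_int x -> alg_int y -> alg_int (x - y).
Proof. by move=> /alg_intE hx /alg_intE hy; apply/alg_intE/integral_sub. Qed.

Lemma alg_int_rat (q : rat) : alg_int (q%:A : L) -> exists z : int, q = z%:~R.
Proof.
case=> p [mp rp].
have int_alg : map_poly (fun z : int => (z%:~R : L)) p = map_poly (in_alg L) (map_poly intr p).
  by rewrite -map_poly_comp; apply: eq_map_poly => z /=; rewrite [RHS](rmorph_int (in_alg L)).
have int_algC : map_poly (intr : int -> algC) p = map_poly ratr (map_poly intr p).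
  by rewrite -map_poly_comp; apply: eq_map_poly => z /=; rewrite rmorph_int.
have root_q : root (map_poly (intr : int -> rat) p) q.
  by move: rp; rewrite /root int_alg -[q%:A]/(in_alg L q) horner_map fmorph_eq0.
have : ratr q \in Aint.
  apply: (@root_monic_Aint (map_poly (intr : int -> algC) p)).
  - by rewrite int_algC fmorph_root.
  - exact: monic_map.
  - by apply/polyOverP => i; rewrite coef_map /= rpred_int.
move=> /(Cint_rat_Aint (Crat_rat q)) /intrP [z hz]; exists z.
by apply: (@fmorph_inj _ _ (@ratr algC)); rewrite /= hz ratr_int.
Qed.

Lemma OL_unit1 : OL_unit (1 : L).
Proof. by split; [exact: alg_int1 | split; [exact: oner_neq0 | rewrite invr1; exact: alg_int1]]. Qed.

Lemma OL_unitM (x y : L) : OL_unit x -> OL_unit y -> OL_unit (x * y).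
Proof.
case=> hx [hx0 hxi] [hy [hy0 hyi]]; split; first exact: alg_intM.
by split; [rewrite mulf_neq0 | rewrite invfM; apply: alg_intM].
Qed.

Lemma OL_unitV (x : L) : OL_unit x -> OL_unit x^-1.
Proof. by case=> hx [hx0 hxi]; split; [|split; [rewrite invr_eq0 | rewrite invrK]]. Qed.

Lemma OL_unitXz (x : L) (z : int) : OL_unit x -> OL_unit (x ^ z).
Proof.
move=> hx; have hXn n : OL_unit (x ^+ n).
  elim: n => [|n ih]; first by rewrite expr0; apply: OL_unit1.
  by rewrite exprS; apply: OL_unitM.
by case: z => n; [exact: hXn | rewrite NegzE -exprnN; apply/OL_unitV/hXn].
Qed.

End AlgebraicIntegers.

Lemma intr_norm_ge1 (R : numDomainType) (z : int) : z != 0 -> 1 <= `|z%:~R : R|.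
Proof. by move=> hz; rewrite -intr_norm ler1z -gtz0_ge1 normr_gt0. Qed.

Section GaloisNorm.
Variables (L : splittingFieldType rat) (R : realType) (iota : {rmorphism L -> R}).
Hypothesis HGal : galois 1 {:L}.

Lemma alg_int_gal (g : gal_of {:L}) x : alg_int x -> alg_int (g x).
Proof.
case=> p [mp rp]; exists p; split => //.
have := congr1 g (eqP rp); rewrite rmorph0 -horner_map -map_poly_comp.
by rewrite (eq_map_poly (rmorph_int g)) => /eqP.
Qed.

Lemma OL_unit_gal (g : gal_of {:L}) x : OL_unit x -> OL_unit (g x).
Proof.
case=> hx [hx0 hxi]; split; first exact: alg_int_gal.
by split; [rewrite fmorph_eq0 | rewrite -fmorphV; apply: alg_int_gal].
Qed.

Lemma galNorm_int x : alg_int x -> exists z : int, galNorm 1 {:L} x = z%:~R.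
Proof.
move=> hx; have /vlineP [q hq] := mem_galNorm HGal (memvf x).
have : alg_int (q%:A : L).
  rewrite -hq; apply: (big_ind (@alg_int L)); first exact: alg_int1.
    exact: alg_intM.
  by move=> g _; apply: alg_int_gal.
move=> /alg_int_rat [z hz]; exists z.
by rewrite hq hz -[_%:A]/(in_alg L _) rmorph_int.
Qed.

Lemma norm_galNorm_unit u : OL_unit u -> `|iota (galNorm 1 {:L} u)| = 1.
Proof.
case=> hu [hu0 hui].
have [z1 h1] := galNorm_int hu; have [z2 h2] := galNorm_int hui.
have e : galNorm 1 {:L} u * galNorm 1 {:L} u^-1 = 1.
  by rewrite -galNormM mulfV // galNorm1.
rewrite h1 h2 in e; have /(congr1 Num.norm) := congr1 iota e.
rewrite rmorphM rmorph1 !rmorph_int normr1 normrM h1 rmorph_int => e1.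
have [z10|z1n0] := eqVneq z1 0; first by move: e1; rewrite z10 normr0 mul0r; lra.
have [z20|z2n0] := eqVneq z2 0; first by move: e1; rewrite z20 normr0 mulr0; lra.
have := intr_norm_ge1 R z1n0; have := intr_norm_ge1 R z2n0; nra.
Qed.

Lemma norm_galNorm_sub_inv b : OL_unit b -> b != 1 -> b != -1 ->
  1 <= `|iota (galNorm 1 {:L} (b - b^-1))|.
Proof.
case=> hb [hb0 hbi] hb1 hbN1.
have [z hz] := galNorm_int (alg_intB hb hbi).
rewrite hz rmorph_int intr_norm_ge1 //; apply/eqP => z0.
move: hz; rewrite z0 mulr0z => /eqP; rewrite galNorm_eq0 subr_eq0 => /eqP bbV.
have : b ^+ 2 == 1 by rewrite expr2 {2}bbV mulfV.
by rewrite sqrf_eq1 (negbTE hb1) (negbTE hbN1).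
Qed.

End GaloisNorm.

Section RealEmbeddings.
Variables (L : splittingFieldType rat) (R : realType) (iota : {rmorphism L -> R}).
Variables (f : L -> R) (Hf : real_emb f).

(* A copy of [f] carrying the ring morphism structure given by [Hf]. *)
Definition emb_fun : L -> R := f.

Fact emb_fun_zmod : GRing.zmod_morphism emb_fun.
Proof.
case: Hf => fD _ _ x y; rewrite /emb_fun.
have f0 : f 0 = 0 by have := fD 0 0; rewrite addr0 => h; lra.
have fN : f (- y) = - f y by have := fD y (- y); rewrite subrr f0 => h; lra.
by rewrite fD fN.
Qed.
Fact emb_fun_monoid : GRing.monoid_morphism emb_fun.
Proof. by case: Hf => _ fM f1; split. Qed.
HB.instance Definition _ := GRing.isZmodMorphism.Build L R emb_fun emb_fun_zmod.
HB.instance Definition _ := GRing.isMonoidMorphism.Build L R emb_fun emb_fun_monoid.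

Lemma rmorph_alg_rat (g : {rmorphism L -> R}) (q : rat) : g q%:A = ratr q.
Proof. exact: (fmorph_eq_rat (g \o in_alg L)). Qed.

(* [f x] is a root of the minimal polynomial of [x], whose roots are the [g x]. *)
Lemma emb_fun_conj x : exists y : L, f x == iota y.
Proof.
have /polyOver1P [p0 hp0] := minPolyOver 1 x.
have /normalField_factors normal1 := normalFieldf (1%AS : {subfield L}).
have [r _ hr] := normal1 (sub1v _) x (memvf x).
have hmap : map_poly emb_fun (minPoly 1 x) = map_poly iota (minPoly 1 x).
  by rewrite hp0 -!map_poly_comp; apply: eq_map_poly => q /=; rewrite !rmorph_alg_rat.
have : root (map_poly emb_fun (minPoly 1 x)) (emb_fun x).
  by rewrite fmorph_root root_minPoly.
rewrite hmap hr rmorph_prod /=.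
under eq_bigr => g _ do rewrite map_polyXsubC.
rewrite -(big_map (fun g : gal_of {:L} => iota (g x)) predT (fun y => 'X - y%:P)).
by rewrite root_prod_XsubC => /mapP [g _ hg]; exists (g x); apply/eqP.
Qed.

Definition emb_lift (x : L) : L := xchoose (emb_fun_conj x).

Lemma emb_liftE x : iota (emb_lift x) = f x.
Proof. by have /eqP -> := xchooseP (emb_fun_conj x). Qed.

Lemma emb_lift_linear : linear emb_lift.
Proof.
move=> a x y; apply: (fmorph_inj iota).
rewrite rmorphD /= !emb_liftE -[a *: x]mulr_algl -[a *: emb_lift x]mulr_algl.
rewrite rmorphM /= emb_liftE.
by rewrite -[f _]/(emb_fun _) !rmorphD !rmorphM /= !rmorph_alg_rat.
Qed.
HB.instance Definition _ := GRing.isLinear.Build rat L L _ emb_lift emb_lift_linear.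

Lemma real_emb_gal : exists g : gal_of {:L}, forall x, f x = iota (g x).
Proof.
have hk : kHom 1 {:L} (linfun emb_lift).
  apply/kHom_lrmorphism; split.
    move=> x y; rewrite !lfunE; apply: (fmorph_inj iota).
    by rewrite rmorphM /= !emb_liftE; case: Hf.
  by rewrite lfunE; apply: (fmorph_inj iota); rewrite emb_liftE rmorph1; case: Hf.
have [g _ hg] := kAut_to_gal (introT idP (etrans (kAutfE _ _) hk)).
by exists g => x; rewrite -hg ?memvf // lfunE emb_liftE.
Qed.

End RealEmbeddings.

Section GoldenRatio.
Variable R : realType.

Definition golden : R := (1 + Num.sqrt 5) / 2.

Lemma golden_gt1 : 1 < golden.
Proof.
have s5 : Num.sqrt (5 : R) ^+ 2 = 5 by rewrite sqr_sqrtr.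
have := sqrtr_ge0 (5 : R); rewrite /golden; nra.
Qed.

Lemma ln_golden_gt0 : 0 < ln golden.
Proof. exact/ln_gt0/golden_gt1. Qed.

(* Clearing denominators and using [P^2 + Q^2 >= 2 P Q], the hypothesis gives
   [M^2 - 3 M + 1 >= 0] for [M := P Q], whose larger root is [golden ^+ 2]. *)
Lemma golden_sqr_le (P Q : R) : 1 <= P -> 1 <= Q -> 1 <= (P - P^-1) * (Q - Q^-1) ->
  golden ^+ 2 <= P * Q.
Proof.
move=> hP hQ h.
have hP0 : P != 0 by rewrite gt_eqF //; lra.
have hQ0 : Q != 0 by rewrite gt_eqF //; lra.
have hPQ : 0 < P * Q by nra.
have e : (P - P^-1) * (Q - Q^-1) = ((P * Q) ^+ 2 - P ^+ 2 - Q ^+ 2 + 1) / (P * Q).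
  by field; rewrite hP0 hQ0.
move: h; rewrite e ler_pdivlMr // mul1r => h.
have hM : (P * Q) ^+ 2 - 3 * (P * Q) + 1 >= 0 by have := sqr_ge0 (P - Q); nra.
have s5 : Num.sqrt (5 : R) ^+ 2 = 5 by rewrite sqr_sqrtr.
have s0 := sqrtr_ge0 (5 : R); rewrite /golden; set M := P * Q in hM hPQ *.
have hM1 : 1 <= M by rewrite /M; nra.
have s51 : 1 < Num.sqrt (5 : R) by nra.
have : (M - (3 + Num.sqrt 5) / 2) * (M - (3 - Num.sqrt 5) / 2) >= 0 by nra.
nra.
Qed.

Lemma normr_sub_inv (x : R) : x != 0 -> `|x - x^-1| = `| `|x| - `|x|^-1 |.
Proof.
move=> hx; have hax : `|x| != 0 by rewrite normr_eq0.
have -> : x - x^-1 = (x ^+ 2 - 1) / x by field.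
have -> : `|x| - `|x|^-1 = (`|x| ^+ 2 - 1) / `|x| by field.
by rewrite !normrM !normfV normr_id real_normK ?num_real.
Qed.

(* Take [P := max |x| |x|^-1]. *)
Lemma sub_inv_ge1_form (x : R) : x != 0 ->
  exists P, [/\ 1 <= P, `|x - x^-1| = P - P^-1 & `|ln `|x| | = ln P].
Proof.
move=> hx; rewrite normr_sub_inv //; have t0 : 0 < `|x| by rewrite normr_gt0.
move: `|x| t0 => t t0; have [t1|t1] := lerP 1 t.
  exists t; split => //; last by rewrite ger0_norm // ln_ge0.
  by rewrite ger0_norm // subr_ge0 (le_trans _ t1) // invf_le1.
have tV1 : 1 <= t^-1 by rewrite invf_ge1 // ltW.
exists t^-1; split; rewrite ?invrK //.
  by rewrite ler0_norm ?opprB // subr_le0 (le_trans (ltW t1)).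
by rewrite lnV ?posrE // ler0_norm // ln_le0 // ltW.
Qed.

Lemma ln_golden_le (x y : R) : x != 0 -> y != 0 ->
  1 <= `|x - x^-1| * `|y - y^-1| -> 2 * ln golden <= `|ln `|x| | + `|ln `|y| |.
Proof.
move=> hx hy; have [P [P1 -> ->]] := sub_inv_ge1_form hx.
have [Q [Q1 -> ->]] := sub_inv_ge1_form hy => h.
have g1 := golden_gt1.
rewrite -lnM ?posrE; [|lra|lra].
rewrite -[2]/(1 *+ 2) mulr_natl -lnXn; last lra.
by rewrite ler_ln ?posrE ?golden_sqr_le //; nra.
Qed.

Lemma normr_sub_inv_recip (x y : R) : x != 0 -> `|x| * `|y| = 1 ->
  `|y - y^-1| = `|x - x^-1|.
Proof.
move=> hx e; have hax : `|x| != 0 by rewrite normr_eq0.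
have hy : y != 0 by apply: contra_eq_neq e => ->; rewrite normr0 mulr0 eq_sym oner_neq0.
rewrite (normr_sub_inv hx) (normr_sub_inv hy).
have -> : `|y| = `|x|^-1 by apply: (mulfI hax); rewrite e mulfV.
by rewrite invrK distrC.
Qed.

Lemma two_normr_le (x y : R) : 2 * `|x| <= `|x + y| + `|x - y|.
Proof.
have -> : 2 * `|x| = `|(x + y) + (x - y)| by rewrite -normr_nat -normrM; congr `|_|; ring.
exact: ler_normD.
Qed.

End GoldenRatio.

Lemma round_sqr_le (R : realType) (x : R) : exists n : int, (x - n%:~R) ^+ 2 <= 1 / 4.
Proof.
exists (Num.floor (x + 1 / 2)).
have := floor_itv (x + 1 / 2); rewrite intrD rmorph1 => /andP [h1 h2].
set f := (Num.floor (x + 1 / 2))%:~R in h1 h2 *; nra.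
Qed.

Section GaussianLattice.
Variable R : realType.
Variable Lam : R -> R -> Prop.
Hypothesis Lam0 : Lam 0 0.
Hypothesis LamB : forall a1 b1 a2 b2, Lam a1 b1 -> Lam a2 b2 -> Lam (a1 - a2) (b1 - b2).
(* Identifying [(a, b)] with [a + b i], [Lam] is a [Z[i]]-module:
   [(n a + m b, n b - m a)] is [(n - m i) (a + b i)]. *)
Hypothesis LamG : forall a b (n m : int), Lam a b ->
  Lam (n%:~R * a + m%:~R * b) (n%:~R * b - m%:~R * a).
Variable delta : R.
Hypothesis delta_gt0 : 0 < delta.
Hypothesis Lam_min : forall a b, Lam a b -> a != 0 \/ b != 0 -> delta <= a ^+ 2 + b ^+ 2.

Definition gauss_dvd (g1 g2 a b : R) := exists n m : int,
  a = n%:~R * g1 + m%:~R * g2 /\ b = n%:~R * g2 - m%:~R * g1.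

Lemma gauss_dvd_refl g1 g2 : gauss_dvd g1 g2 g1 g2.
Proof. by exists 1, 0; rewrite rmorph1 rmorph0; split; ring. Qed.

Lemma gauss_dvd0 g1 g2 : gauss_dvd g1 g2 0 0.
Proof. by exists 0, 0; rewrite rmorph0; split; ring. Qed.

Lemma gauss_dvdD g1 g2 a1 b1 a2 b2 : gauss_dvd g1 g2 a1 b1 -> gauss_dvd g1 g2 a2 b2 ->
  gauss_dvd g1 g2 (a1 + a2) (b1 + b2).
Proof.
move=> [n1 [m1 [-> ->]]] [n2 [m2 [-> ->]]]; exists (n1 + n2), (m1 + m2).
by rewrite !rmorphD; split; ring.
Qed.

Lemma gauss_dvdG g1 g2 a b (n m : int) : gauss_dvd g1 g2 a b ->
  gauss_dvd g1 g2 (n%:~R * a + m%:~R * b) (n%:~R * b - m%:~R * a).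
Proof.
move=> [p [q [-> ->]]]; exists (n * p - m * q), (n * q + m * p).
by rewrite !(rmorphB, rmorphD, rmorphM); split; ring.
Qed.

Lemma Lam_divmod a1 b1 a2 b2 : Lam a1 b1 -> Lam a2 b2 -> 0 < a2 ^+ 2 + b2 ^+ 2 ->
  exists (n m : int) r1 r2, [/\ Lam r1 r2, a1 = (n%:~R * a2 + m%:~R * b2) + r1,
    b1 = (n%:~R * b2 - m%:~R * a2) + r2 & 2 * (r1 ^+ 2 + r2 ^+ 2) <= a2 ^+ 2 + b2 ^+ 2].
Proof.
move=> h1 h2; set D := a2 ^+ 2 + b2 ^+ 2 => hD.
have hD0 : D != 0 by rewrite gt_eqF.
set s0 := (a1 * a2 + b1 * b2) / D; set t0 := (a1 * b2 - b1 * a2) / D.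
have e1 : a1 = s0 * a2 + t0 * b2 by rewrite /s0 /t0 /D; field.
have e2 : b1 = s0 * b2 - t0 * a2 by rewrite /s0 /t0 /D; field.
have [n hn] := round_sqr_le s0; have [m hm] := round_sqr_le t0.
exists n, m, (a1 - (n%:~R * a2 + m%:~R * b2)), (b1 - (n%:~R * b2 - m%:~R * a2)).
split; [by apply/LamB/LamG | ring | ring |].
have -> : (a1 - (n%:~R * a2 + m%:~R * b2)) ^+ 2 + (b1 - (n%:~R * b2 - m%:~R * a2)) ^+ 2
    = ((s0 - n%:~R) ^+ 2 + (t0 - m%:~R) ^+ 2) * D by rewrite e1 e2 /D; ring.
nra.
Qed.

Lemma Lam_gcd_bounded (k : nat) a1 b1 a2 b2 : Lam a1 b1 -> Lam a2 b2 ->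
  a2 ^+ 2 + b2 ^+ 2 < delta * 2 ^+ k ->
  exists g1 g2, [/\ Lam g1 g2, gauss_dvd g1 g2 a1 b1 & gauss_dvd g1 g2 a2 b2].
Proof.
elim: k a1 b1 a2 b2 => [|k ih] a1 b1 a2 b2 h1 h2 hk.
all: have [/orP nz|/norP [/negPn/eqP -> /negPn/eqP ->]] := boolP ((a2 != 0) || (b2 != 0));
  last by exists a1, b1; split; [|exact: gauss_dvd_refl|exact: gauss_dvd0].
all: have hmin := Lam_min h2 nz.
  by move: hk; rewrite expr0 mulr1; lra.
have [|n [m [r1 [r2 [hr e1 e2 small]]]]] := Lam_divmod h1 h2; first exact: lt_le_trans delta_gt0 hmin.
have [|g1 [g2 [hg d2 dr]]] := ih _ _ _ _ h2 hr.
  by move: hk; rewrite [2 ^+ k.+1]exprS mulrA (mulrC delta) -mulrA; lra.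
exists g1, g2; split; rewrite // e1 e2; exact/gauss_dvdD/dr/gauss_dvdG.
Qed.

Lemma Lam_gcd a1 b1 a2 b2 : Lam a1 b1 -> Lam a2 b2 ->
  exists g1 g2, [/\ Lam g1 g2, gauss_dvd g1 g2 a1 b1 & gauss_dvd g1 g2 a2 b2].
Proof.
move=> h1 h2; set D := a2 ^+ 2 + b2 ^+ 2.
have hD : 0 <= D / delta by rewrite divr_ge0 ?addr_ge0 ?sqr_ge0 ?ltW.
have hk := archi_boundP hD; set k := Num.Def.archi_bound _ in hk.
apply: (@Lam_gcd_bounded k) => //.
have hk2 : k%:R <= (2 ^+ k : R) by rewrite -natrX ler_nat ltnW // ltn_expl.
have : D / delta < 2 ^+ k by lra.
by rewrite ltr_pdivrMr // mulrC.
Qed.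

(* The integer multiples of the covolume [|g|^2] of [Lam = Z[i] g]. *)
Definition covol_multiple (T : R) :=
  exists g1 g2, Lam g1 g2 /\ exists n : int, T = n%:~R * (g1 ^+ 2 + g2 ^+ 2).

Lemma covol_multiple0 : covol_multiple 0.
Proof. by exists 0, 0; split => //; exists 0; rewrite rmorph0 mul0r. Qed.

Lemma covol_multiple_det a1 b1 a2 b2 : Lam a1 b1 -> Lam a2 b2 ->
  covol_multiple (a1 * b2 - a2 * b1).
Proof.
move=> h1 h2; have [g1 [g2 [hg [n1 [m1 [-> ->]]] [n2 [m2 [-> ->]]]]]] := Lam_gcd h1 h2.
exists g1, g2; split => //; exists (m1 * n2 - n1 * m2).
by rewrite !(rmorphB, rmorphM); ring.
Qed.

Lemma covol_multipleB T1 T2 : covol_multiple T1 -> covol_multiple T2 ->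
  covol_multiple (T1 - T2).
Proof.
move=> [h1 [h2 [hh [n1 ->]]]] [k1 [k2 [hk [n2 ->]]]].
have [g1 [g2 [hg [p [q [-> ->]]] [p' [q' [-> ->]]]]]] := Lam_gcd hh hk.
exists g1, g2; split => //; exists (n1 * (p ^+ 2 + q ^+ 2) - n2 * (p' ^+ 2 + q' ^+ 2)).
by rewrite !(rmorphB, rmorphM, rmorphD, rmorphXn); ring.
Qed.

Lemma covol_multiple_ge T : covol_multiple T -> T != 0 -> delta <= `|T|.
Proof.
move=> [g1 [g2 [hg [n ->]]]] hT.
have hn : n != 0 by apply: contraNneq hT => ->; rewrite rmorph0 mul0r.
have hg0 : g1 != 0 \/ g2 != 0.
  have [g10|] := eqVneq g1 0; last by left.
  have [g20|] := eqVneq g2 0; last by right.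
  by move: hT; rewrite g10 g20 expr0n /= addr0 mulr0 eqxx.
have hm := Lam_min hg hg0; have hsq : 0 <= g1 ^+ 2 + g2 ^+ 2 by rewrite addr_ge0 ?sqr_ge0.
have hn1 := intr_norm_ge1 R hn.
rewrite normrM (ger0_norm hsq); nra.
Qed.

End GaussianLattice.

Lemma LOG_eq_opp (L : fieldExtType rat) (R : realType) (f g : L -> R) x :
  f x != 0 -> `|f x| * `|g x| = 1 -> LOG x g = - LOG x f.
Proof.
move=> fx0 e; have gx0 : g x != 0.
  by apply: contra_eq_neq e => ->; rewrite normr0 mulr0 eq_sym oner_neq0.
by apply/eqP; rewrite -subr_eq0 opprK addrC -lnM ?posrE ?normr_gt0 // e ln1.
Qed.

Section LOGMorphism.
Variables (L : fieldExtType rat) (R : realType) (f : {rmorphism L -> R}).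

Lemma LOGE x : LOG x f = ln `|f x|.
Proof. by []. Qed.

Lemma LOG1 : LOG 1 f = 0.
Proof. by rewrite LOGE rmorph1 normr1 ln1. Qed.

Lemma LOGN x : LOG (- x) f = LOG x f.
Proof. by rewrite !LOGE rmorphN normrN. Qed.

Lemma LOGM x y : x != 0 -> y != 0 -> LOG (x * y) f = LOG x f + LOG y f.
Proof. by move=> hx hy; rewrite !LOGE rmorphM normrM lnM // posrE normr_gt0 fmorph_eq0. Qed.

Lemma LOGV x : x != 0 -> LOG x^-1 f = - LOG x f.
Proof. by move=> hx; rewrite !LOGE fmorphV normfV lnV // posrE normr_gt0 fmorph_eq0. Qed.

Lemma LOGXz x (z : int) : x != 0 -> LOG (x ^ z) f = z%:~R * LOG x f.
Proof.
move=> hx; have LOGXn n : LOG (x ^+ n) f = n%:R * LOG x f.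
  by rewrite !LOGE rmorphXn normrX lnXn ?normr_gt0 ?fmorph_eq0 // mulr_natl.
case: z => n; first exact: LOGXn.
by rewrite NegzE -exprnN LOGV ?expf_neq0 // LOGXn intrN mulNr.
Qed.

End LOGMorphism.

Section CyclicQuartic.
Variables (L : splittingFieldType rat) (R : realType) (iota : {rmorphism L -> R}).
Hypothesis HGal : galois 1 {:L}.
Variable s : gal_of {:L}.
Hypothesis Hs : 'Gal({:L} / 1%VS)%g = <[s]>%g.
Hypothesis Hos : #[s]%g = 4%N.

Lemma gal_expgP (g : gal_of {:L}) : exists2 k, (k < 4)%N & g = (s ^+ k)%g.
Proof.
have : g \in 'Gal({:L} / 1%VS)%g by rewrite gal_kHom ?sub1v // k1AHom.
by rewrite Hs => /cyclePmin [k hk ->]; exists k; rewrite // -Hos.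
Qed.

Lemma expg4_inj i j : (i < 4)%N -> (j < 4)%N -> (s ^+ i)%g = (s ^+ j)%g -> i = j.
Proof. by move=> hi hj /eqP; rewrite eq_expg_mod_order Hos !modn_small // => /eqP. Qed.

Lemma gal_expgD j k x : (s ^+ k)%g ((s ^+ j)%g x) = (s ^+ (j + k))%g x.
Proof. by rewrite expgD galM ?memvf. Qed.

Definition tau (k : nat) : {rmorphism L -> R} := iota \o (s ^+ k)%g.

Lemma tau0 x : tau 0 x = iota x.
Proof. by rewrite /= expg0 gal_id. Qed.

Lemma tau_expg j k x : tau k ((s ^+ j)%g x) = tau (j + k) x.
Proof. by rewrite /= gal_expgD. Qed.

Lemma tau_mod4 k x : tau k x = tau (k %% 4) x.
Proof. by rewrite /= -Hos expg_mod_order. Qed.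

Lemma real_emb_tau k : real_emb (tau k).
Proof. by split=> [x y|x y|]; rewrite ?rmorphD ?rmorphM ?rmorph1. Qed.

Lemma real_embP f : real_emb f -> exists2 k, (k < 4)%N & f = tau k.
Proof.
move=> hf; have [g hg] := real_emb_gal iota hf; have [k hk gk] := gal_expgP g.
by exists k => //; apply: funext => x; rewrite hg gk.
Qed.

Lemma tau_inj i j : (i < 4)%N -> (j < 4)%N -> (tau i : L -> R) = tau j -> i = j.
Proof.
move=> hi hj e; apply: expg4_inj => //; apply/eqP/gal_eqP => x _.
exact: (fmorph_inj iota (congr1 (fun f => f x) e)).
Qed.

Lemma galNorm1_tau x : iota (galNorm 1 {:L} x) = \prod_(k < 4) tau k x.
Proof.
rewrite /galNorm.
have -> : 'Gal({:L} / 1%VS)%g = (fun k : 'I_4 => (s ^+ k)%g) @: [set: 'I_4].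
  apply/setP => g; apply/idP/imsetP => [_|[k _ ->]]; last by rewrite Hs mem_cycle.
  by have [k hk ->] := gal_expgP g; exists (Ordinal hk).
rewrite rmorph_prod big_imset /=; first by apply: eq_bigl => k; rewrite inE.
by move=> i j _ _ /(expg4_inj (ltn_ord i) (ltn_ord j)) /val_inj.
Qed.

Lemma prod_ord4 (F : nat -> R) : \prod_(k < 4) F k = F 0%N * F 1%N * F 2%N * F 3%N.
Proof. by rewrite !big_ord_recr big_ord0 /= mul1r. Qed.

Lemma prod_norm_tau_unit u : OL_unit u -> \prod_(k < 4) `|tau k u| = 1.
Proof. by move=> hu; rewrite -normr_prod -galNorm1_tau (norm_galNorm_unit iota HGal). Qed.

Lemma prod_norm_tau_sub_inv b : OL_unit b -> b != 1 -> b != -1 ->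
  1 <= \prod_(k < 4) `|tau k b - (tau k b)^-1|.
Proof.
move=> hb b1 bN1; rewrite -normr_prod.
under eq_bigr => k _ do rewrite -fmorphV -rmorphB.
by rewrite -galNorm1_tau (norm_galNorm_sub_inv iota HGal).
Qed.

(* Schinzel: [N_{L/Q}(b - b^-1)] is a nonzero integer, and its four conjugates
   pair up by hypothesis. *)
Lemma ln_golden_le_LOG b : OL_unit b -> b != 1 -> b != -1 ->
  (forall k, `|tau k.+2 b - (tau k.+2 b)^-1| = `|tau k b - (tau k b)^-1|) ->
  2 * ln (golden R) <= `|LOG b (tau 0)| + `|LOG b (tau 1)|.
Proof.
move=> hb b1 bN1 sym; have b0 : b != 0 by case: hb => _ [].
have := prod_norm_tau_sub_inv hb b1 bN1.
rewrite (prod_ord4 (fun k => `|tau k b - (tau k b)^-1|)) (sym 0%N) (sym 1%N).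
rewrite -[X in 1 <= X]mulrA => h; apply: ln_golden_le; rewrite ?fmorph_eq0 //.
set p := (X in 1 <= X); have p0 : 0 <= p by rewrite mulr_ge0.
by move: h; rewrite -/p; nra.
Qed.

(* [r * s^2 r] is [N_{L/l} r], so this says [N_{L/l} r = +-1]. *)
Definition rel_unit (r : L) := OL_unit r /\ (r * (s ^+ 2)%g r) ^+ 2 = 1.

Lemma rel_unit_neq0 r : rel_unit r -> r != 0.
Proof. by case=> [[_ []]]. Qed.

Lemma rel_unit1 : rel_unit 1.
Proof. by split; [exact: OL_unit1 | rewrite rmorph1 mulr1 expr1n]. Qed.

Lemma rel_unitM r1 r2 : rel_unit r1 -> rel_unit r2 -> rel_unit (r1 * r2).
Proof.
case=> h1 e1 [h2 e2]; split; first exact: OL_unitM.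
rewrite rmorphM -[1](mulr1 1) -{1}e1 -e2; ring.
Qed.

Lemma rel_unitV r : rel_unit r -> rel_unit r^-1.
Proof. by case=> h e; split; [exact: OL_unitV | rewrite fmorphV -invfM exprVn e invr1]. Qed.

Lemma rel_unitXz r (z : int) : rel_unit r -> rel_unit (r ^ z).
Proof.
case=> h e; split; first exact: OL_unitXz.
by rewrite fmorphXz -expfzMl exprnP exprzAC -exprnP e exp1rz.
Qed.

Lemma rel_unit_gal r : rel_unit r -> rel_unit ((s ^+ 1)%g r).
Proof.
case=> h e; split; first exact: OL_unit_gal.
by rewrite gal_expgD -[(1 + 2)%N]/(2 + 1)%N -gal_expgD -rmorphM -rmorphXn e rmorph1.
Qed.

Lemma rel_unit_norm_pair r k : rel_unit r -> `|tau k r| * `|tau k.+2 r| = 1.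
Proof.
case=> _ e; rewrite -normrM -[k.+2]/(2 + k)%N -tau_expg -rmorphM.
by apply/eqP; rewrite -sqr_norm_eq1 -rmorphXn e rmorph1.
Qed.

Lemma LOG_rel_unit2 r k : rel_unit r -> LOG r (tau k.+2) = - LOG r (tau k).
Proof.
move=> hr; apply: LOG_eq_opp; last exact: rel_unit_norm_pair.
by rewrite fmorph_eq0 rel_unit_neq0.
Qed.

(* In the basis [tau 0, ..., tau 3] the LOG vector of a relative unit is a
   combination of [(1, 0, -1, 0)] and [(0, 1, 0, -1)], while that of [u_l] is
   proportional to [(1, -1, 1, -1)]. *)
Definition cos4 (k : nat) : R := nth 0 [:: 1; 0; -1; 0] (k %% 4).
Definition sin4 (k : nat) : R := nth 0 [:: 0; 1; 0; -1] (k %% 4).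
Definition alt4 (k : nat) : R := nth 0 [:: 1; -1; 1; -1] (k %% 4).
Definition rel_log (a b : R) (k : nat) : R := a * cos4 k + b * sin4 k.

Lemma mod4_cases k : [\/ k %% 4 = 0, k %% 4 = 1, k %% 4 = 2 | k %% 4 = 3]%N.
Proof.
have : (k %% 4 < 4)%N by rewrite ltn_mod.
by case: (k %% 4)%N => [|[|[|[|]]]] // _; [constructor 1|constructor 2|constructor 3|constructor 4].
Qed.

Lemma LOG_mod4 x k : LOG x (tau k) = LOG x (tau (k %% 4)).
Proof. by rewrite !LOGE tau_mod4. Qed.

Lemma LOG_rel_unit r k : rel_unit r ->
  LOG r (tau k) = rel_log (LOG r (tau 0)) (LOG r (tau 1)) k.
Proof.
move=> hr; rewrite LOG_mod4 /rel_log /cos4 /sin4.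
have h2 := LOG_rel_unit2 0 hr; have h3 := LOG_rel_unit2 1 hr.
by case: (mod4_cases k) => ->; rewrite /= ?h2 ?h3; ring.
Qed.

Definition rel_lattice (a b : R) :=
  exists r, rel_unit r /\ LOG r (tau 0) = a /\ LOG r (tau 1) = b.

Lemma rel_lattice0 : rel_lattice 0 0.
Proof. by exists 1; rewrite !LOG1; split => //; exact: rel_unit1. Qed.

Lemma rel_latticeB a1 b1 a2 b2 : rel_lattice a1 b1 -> rel_lattice a2 b2 ->
  rel_lattice (a1 - a2) (b1 - b2).
Proof.
case=> r1 [h1 [<- <-]] [r2 [h2 [<- <-]]]; exists (r1 * r2^-1).
have n1 := rel_unit_neq0 h1; have n2 := rel_unit_neq0 h2.
split; first exact/rel_unitM/rel_unitV.
by rewrite !LOGM ?invr_eq0 // !LOGV.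
Qed.

Lemma rel_latticeG a b (n m : int) : rel_lattice a b ->
  rel_lattice (n%:~R * a + m%:~R * b) (n%:~R * b - m%:~R * a).
Proof.
case=> r [hr [<- <-]]; exists (r ^ n * ((s ^+ 1)%g r) ^ m).
have r0 := rel_unit_neq0 hr; have sr := rel_unit_gal hr; have sr0 := rel_unit_neq0 sr.
split; first exact/rel_unitM/rel_unitXz/sr/rel_unitXz.
rewrite !LOGM ?expfz_neq0 // !LOGXz // !LOGE !tau_expg -!LOGE /=.
by rewrite (LOG_rel_unit2 0 hr); split; ring.
Qed.

Lemma rel_lattice_ge a b : rel_lattice a b -> a != 0 \/ b != 0 ->
  2 * ln (golden R) <= `|a| + `|b|.
Proof.
case=> r [hr [<- <-]] hab; apply: ln_golden_le_LOG; first exact: hr.1.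
- by apply/eqP => r1; move: hab; rewrite r1 !LOG1 eqxx; case.
- by apply/eqP => rN1; move: hab; rewrite rN1 !LOGN !LOG1 eqxx; case.
- move=> k; apply: normr_sub_inv_recip; last exact: rel_unit_norm_pair.
  by rewrite fmorph_eq0 rel_unit_neq0.
Qed.

Lemma rel_lattice_sqr_ge a b : rel_lattice a b -> a != 0 \/ b != 0 ->
  2 * ln (golden R) ^+ 2 <= a ^+ 2 + b ^+ 2.
Proof.
move=> h /(rel_lattice_ge h) hs; have lg := ln_golden_gt0 R.
rewrite -(real_normK (num_real a)) -(real_normK (num_real b)).
have := normr_ge0 a; have := normr_ge0 b; have := sqr_ge0 (`|a| - `|b|); nra.
Qed.

Variables (l : {subfield L}) (Hl : \dim l = 2%N).

Lemma galois_l : galois l {:L}.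
Proof. by apply: (galoisS _ HGal); rewrite sub1v subvf. Qed.

Lemma gal_l : 'Gal({:L} / l)%g = [set 1%g; (s ^+ 2)%g].
Proof.
have dimL : \dim {:L} = 4%N.
  by have := galois_dim HGal; rewrite Hs dimv1 divn1 => ->; rewrite -Hos.
have card2 : #|'Gal({:L} / l)%g| = 2%N.
  by rewrite -(galois_dim galois_l) dimL Hl.
have : 'Gal({:L} / l)%G \in [set H : {group gal_of {:L}} | H \subset <[s]>%g & #|H| == 2%N].
  by rewrite inE -Hs galS ?sub1v //= card2.
rewrite cycle_sub_group Hos // inE => /eqP /(congr1 val) /= ->.
by rewrite cycle2g // orderXdiv Hos.
Qed.

Lemma galNorm_l x : galNorm l {:L} x = x * (s ^+ 2)%g x.
Proof.
rewrite /galNorm gal_l big_setU1 /= ?big_set1 ?gal_id //.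
by rewrite inE eq_sym -(expg0 s) eq_expg_mod_order Hos.
Qed.

Lemma gal_l_fix x : x \in l -> (s ^+ 2)%g x = x.
Proof. by apply: fixed_gal (subvf l) _; rewrite gal_l !inE eqxx orbT. Qed.

Variable ul : L.
Hypothesis Hul_l : ul \in l.
Hypothesis Hul_unit : OL_unit ul.
Hypothesis Hul_gt1 : 1 < iota ul.
Hypothesis Hul_fund : forall v : L, v \in l -> OL_unit v ->
  exists k : int, v = ul ^ k \/ v = - ul ^ k.
Hypothesis Hnorm : ~ exists u : L, OL_unit u /\
  (galNorm l {:L} u = ul \/ galNorm l {:L} u = - ul).

Lemma ul_neq0 : ul != 0.
Proof. by case: Hul_unit => _ []. Qed.

Definition log_ul : R := ln (iota ul).

Lemma log_ul_ge0 : 0 <= log_ul.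
Proof. exact/ln_ge0/ltW. Qed.

Lemma tau_ul2 k : tau k.+2 ul = tau k ul.
Proof. by rewrite -[k.+2]/(2 + k)%N -tau_expg gal_l_fix. Qed.

Lemma LOG_ul k : LOG ul (tau k) = log_ul * alt4 k.
Proof.
have e0 : LOG ul (tau 0) = log_ul by rewrite LOGE tau0 gtr0_norm // (lt_trans ltr01).
have e1 : LOG ul (tau 1) = - log_ul.
  rewrite -e0; apply: LOG_eq_opp; first by rewrite fmorph_eq0 ul_neq0.
  have := prod_norm_tau_unit Hul_unit.
  rewrite (prod_ord4 (fun k => `|tau k ul|)) !tau_ul2 -[X in X = 1]mulrA -expr2.
  by move/eqP; rewrite sqrp_eq1 ?mulr_ge0 // => /eqP.
rewrite LOG_mod4 /alt4; case: (mod4_cases k) => -> /=.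
- by rewrite e0 mulr1.
- by rewrite e1 mulrN1.
- by rewrite !LOGE tau_ul2 -LOGE e0 mulr1.
- by rewrite !LOGE tau_ul2 -LOGE e1 mulrN1.
Qed.

Lemma ln_golden_le_log_ul : ln (golden R) <= log_ul.
Proof.
have ul1 : ul != 1 by apply: contraTneq Hul_gt1 => ->; rewrite rmorph1 ltxx.
have ulN1 : ul != -1 by apply/eqP => e; move: Hul_gt1; rewrite e rmorphN rmorph1; lra.
have sym k : `|tau k.+2 ul - (tau k.+2 ul)^-1| = `|tau k ul - (tau k ul)^-1|.
  by rewrite tau_ul2.
have := ln_golden_le_LOG Hul_unit ul1 ulN1 sym.
rewrite !LOG_ul /alt4 /= mulr1 mulrN1 normrN ger0_norm; [lra | exact: log_ul_ge0].
Qed.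

(* [N_{L/l}(u) = +-ul^k]; as no unit has norm [+-ul], [k] is even and
   [u ul^(-k/2)] is a relative unit. *)
Lemma unit_decomp u : OL_unit u ->
  exists (m : int) r, rel_unit r /\ u = ul ^ m * r.
Proof.
move=> hu; have Nu_l : galNorm l {:L} u \in l := mem_galNorm galois_l (memvf u).
have Nu_unit : OL_unit (galNorm l {:L} u) by rewrite galNorm_l; apply/OL_unitM/OL_unit_gal.
have [k hk] := Hul_fund Nu_l Nu_unit.
have [m [b [kE b01]]] : exists m b : int, k = m * 2 + b /\ (b = 0 \/ b = 1).
  exists (k %/ 2)%Z, (k %% 2)%Z; split; first exact: divz_eq.
  have : (0 <= k %% 2)%Z by apply: modz_ge0.
  have : (k %% 2 < 2)%Z by apply: ltz_pmod.
  lia.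
pose r := u * ul ^ (- m).
have hr : OL_unit r by apply/OL_unitM/OL_unitXz.
have Nr : galNorm l {:L} r = ul ^ b \/ galNorm l {:L} r = - ul ^ b.
  have -> : galNorm l {:L} r = galNorm l {:L} u * ul ^ (- m * 2).
    rewrite galNormM [galNorm _ _ (_ ^ _)]galNorm_l gal_l_fix; last exact: rpredXz.
    by rewrite -expr2 exprnP exprz_exp.
  have e : ul ^ k * ul ^ (- m * 2) = ul ^ b.
    by rewrite -expfzDr ?ul_neq0 // kE; congr (_ ^ _); ring.
  by case: hk => ->; [left | right; rewrite mulNr]; rewrite e.
case: b01 => b_eq; rewrite b_eq in Nr.
- exists m, r; split; last by rewrite /r mulrCA -expfzDr ?ul_neq0 // subrr expr0z mulr1.
  by split => //; rewrite -galNorm_l; case: Nr => ->; rewrite ?sqrrN expr1n.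
- by case: Hnorm; exists r; rewrite !expr1z in Nr.
Qed.

Definition wedge_form (a b T : R) (i j : nat) : R :=
  log_ul * (alt4 i * rel_log a b j - alt4 j * rel_log a b i) +
  T * (cos4 i * sin4 j - cos4 j * sin4 i).

Lemma LOG_unit u : OL_unit u -> exists (m : int) a b, rel_lattice a b /\
  forall k, LOG u (tau k) = m%:~R * log_ul * alt4 k + rel_log a b k.
Proof.
move=> hu; have [m [r [hr ->]]] := unit_decomp hu.
exists m, (LOG r (tau 0)), (LOG r (tau 1)); split; first by exists r.
move=> k; rewrite LOGM ?expfz_neq0 ?ul_neq0 ?rel_unit_neq0 //.
by rewrite LOGXz ?ul_neq0 // LOG_ul (LOG_rel_unit k hr) mulrA.
Qed.

Lemma wedge_decomp w : wedge2_LOG_group w -> exists a b T,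
  [/\ rel_lattice a b, covol_multiple rel_lattice T &
      forall i j, w (tau i) (tau j) = wedge_form a b T i j].
Proof.
have delta_gt0 : 0 < 2 * ln (golden R) ^+ 2 by rewrite mulr_gt0 ?exprn_gt0 ?ln_golden_gt0.
have det := covol_multiple_det rel_latticeB rel_latticeG delta_gt0 rel_lattice_sqr_ge.
have sub := covol_multipleB rel_latticeB rel_latticeG delta_gt0 rel_lattice_sqr_ge.
have latZ n a b : rel_lattice a b -> rel_lattice (n%:~R * a) (n%:~R * b).
  by move=> /(rel_latticeG n 0); rewrite !mul0r addr0 subr0.
elim=> [|x y hx hy|w1 w2 _ [a1 [b1 [T1 [h1 t1 e1]]]] _ [a2 [b2 [T2 [h2 t2 e2]]]]].
- exists 0, 0, 0; split; [exact: rel_lattice0 | exact: covol_multiple0 rel_lattice0 |].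
  by move=> i j; rewrite /wedge_form /rel_log; ring.
- have [m1 [a1 [b1 [h1 e1]]]] := LOG_unit hx.
  have [m2 [a2 [b2 [h2 e2]]]] := LOG_unit hy.
  exists (m1%:~R * a2 - m2%:~R * a1), (m1%:~R * b2 - m2%:~R * b1), (a1 * b2 - a2 * b1).
  split; [exact/rel_latticeB/latZ/h1/latZ | exact: det |].
  by move=> i j; rewrite /wedge2 !e1 !e2 /wedge_form /rel_log; ring.
- exists (a1 - a2), (b1 - b2), (T1 - T2); split; [exact: rel_latticeB | exact: sub |].
  by move=> i j; rewrite e1 e2 /wedge_form /rel_log; ring.
Qed.

Definition form_norm1 (a b T : R) : R :=
  (\sum_(i < 4) \sum_(j < 4) `|wedge_form a b T i j|) / 2.

Lemma form_norm1E a b T : form_norm1 a b T =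
  `|log_ul * (a + b) + T| + `|log_ul * (a + b) - T| + `|log_ul * (a - b) + T| +
  `|log_ul * (a - b) - T| + `|2 * log_ul * a| + `|2 * log_ul * b|.
Proof.
have wC i j : `|wedge_form a b T j i| = `|wedge_form a b T i j|.
  by rewrite -normrN /wedge_form; congr `|_|; ring.
have w0 i : wedge_form a b T i i = 0 by rewrite /wedge_form; ring.
rewrite /form_norm1 !big_ord_recr !big_ord0 /= !w0 (wC 0%N 1%N) (wC 0%N 2%N) (wC 0%N 3%N).
rewrite (wC 1%N 2%N) (wC 1%N 3%N) (wC 2%N 3%N).
have -> : wedge_form a b T 0 1 = log_ul * (a + b) + T.
  by rewrite /wedge_form /rel_log /alt4 /cos4 /sin4 /=; ring.
have -> : wedge_form a b T 0 2 = - (2 * log_ul * a).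
  by rewrite /wedge_form /rel_log /alt4 /cos4 /sin4 /=; ring.
have -> : wedge_form a b T 0 3 = log_ul * (a - b) - T.
  by rewrite /wedge_form /rel_log /alt4 /cos4 /sin4 /=; ring.
have -> : wedge_form a b T 1 2 = log_ul * (a - b) + T.
  by rewrite /wedge_form /rel_log /alt4 /cos4 /sin4 /=; ring.
have -> : wedge_form a b T 1 3 = 2 * log_ul * b.
  by rewrite /wedge_form /rel_log /alt4 /cos4 /sin4 /=; ring.
have -> : wedge_form a b T 2 3 = - (log_ul * (a + b) - T).
  by rewrite /wedge_form /rel_log /alt4 /cos4 /sin4 /=; ring.
by rewrite !normrN normr0; field.
Qed.

Lemma form_norm1_ge a b T : rel_lattice a b -> covol_multiple rel_lattice T ->
  [\/ a != 0, b != 0 | T != 0] -> 8 * ln (golden R) ^+ 2 <= form_norm1 a b T.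
Proof.
move=> hl hT nz; rewrite form_norm1E.
have lg := ln_golden_gt0 R; have lc := ln_golden_le_log_ul; have c0 := log_ul_ge0.
have [/orP hab|/norP [/negPn/eqP a0 /negPn/eqP b0]] := boolP ((a != 0) || (b != 0)).
  have hs := rel_lattice_ge hl hab.
  have t1 := two_normr_le (log_ul * (a + b)) T.
  have t2 := two_normr_le (log_ul * (a - b)) T.
  have u1 := two_normr_le a b; have u2 := two_normr_le b a.
  rewrite (distrC b) (addrC b) in u2; rewrite !normrM (ger0_norm c0) in t1 t2.
  have n2 x : `|2 * log_ul * x| = 2 * log_ul * `|x| by rewrite normrM ger0_norm ?mulr_ge0.
  have h1 : log_ul * (`|a| + `|b|) <= log_ul * (`|a + b| + `|a - b|) by rewrite ler_wpM2l //; lra.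
  have h2 : ln (golden R) * (`|a| + `|b|) <= log_ul * (`|a| + `|b|).
    by rewrite ler_wpM2r ?addr_ge0.
  have h3 : ln (golden R) * (2 * ln (golden R)) <= ln (golden R) * (`|a| + `|b|).
    by apply: ler_wpM2l => //; apply: ltW.
  rewrite !n2; lra.
have hT0 : T != 0 by case: nz; rewrite ?a0 ?b0 ?eqxx.
have := covol_multiple_ge rel_lattice_sqr_ge hT hT0.
by rewrite a0 b0 !(addr0, subr0, mulr0, normr0, add0r, sub0r, normrN); lra.
Qed.

Local Open Scope classical_set_scope.

Lemma wedge_norm1_form (w : (L -> R) -> (L -> R) -> R) a b T :
  (forall i j, w (tau i) (tau j) = wedge_form a b T i j) ->
  wedge_norm1 w = form_norm1 a b T.
Proof.
move=> hw; rewrite /wedge_norm1 /form_norm1; congr (_ / 2).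
pose A : set ('I_4 * 'I_4) := [set p | p.1 != p.2].
pose h (p : 'I_4 * 'I_4) : (L -> R) * (L -> R) := (tau p.1 : L -> R, tau p.2 : L -> R).
have inj_h : {in A &, injective h}.
  move=> [i j] [i' j'] _ _ [/(tau_inj (ltn_ord i) (ltn_ord i'))/val_inj -> ].
  by move=> /(tau_inj (ltn_ord j) (ltn_ord j'))/val_inj ->.
have -> : emb_pairs (L:=L) (R:=R) = h @` A.
  apply/seteqP; split => [[f g] [] | _ [[i j] /= ij <-]].
    move=> /= hf [hg fg]; have [i hi ef] := real_embP hf; have [j hj eg] := real_embP hg.
    exists (Ordinal hi, Ordinal hj); last by rewrite /h /= ef eg.
    by apply/eqP => -[e]; apply: fg; rewrite ef eg e.
  split; [exact: real_emb_tau | split; [exact: real_emb_tau |]] => /= e.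
  by move: ij; rewrite /A /= (val_inj (tau_inj (ltn_ord i) (ltn_ord j) e)) eqxx.
rewrite fsbig_image // (@fsbig_widen _ _ _ _ A setT) //; last first.
  move=> [i j] [_ /=]; rewrite /A /= => /negP; rewrite negbK => /eqP <-.
  by rewrite /h /= hw; apply/eqP; rewrite normr_eq0; apply/eqP; rewrite /wedge_form; ring.
have -> : [set: 'I_4 * 'I_4] = [set` enum [set: 'I_4 * 'I_4]].
  by apply/seteqP; split => p //= _; rewrite mem_enum inE.
rewrite -fsbig_seq ?enum_uniq // big_enum /= (eq_bigl (fun _ => true)) => [|p]; last by rewrite in_setT.
rewrite -(pair_bigA _ (fun i j : 'I_4 => `|w (tau i) (tau j)|)) /=.
by apply: eq_bigr => i _; apply: eq_bigr => j _; rewrite hw.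
Qed.

Lemma wedge_norm1_ge (w : (L -> R) -> (L -> R) -> R) : wedge2_LOG_group w -> wedge_nonzero w ->
  8 * ln (golden R) ^+ 2 <= wedge_norm1 w.
Proof.
move=> hw [f [g [hf [hg nz]]]].
have [a [b [T [hl hT e]]]] := wedge_decomp hw.
rewrite (wedge_norm1_form e); apply: form_norm1_ge => //.
have [a0|] := eqVneq a 0; last by constructor 1.
have [b0|] := eqVneq b 0; last by constructor 2.
have [T0|] := eqVneq T 0; last by constructor 3.
have [i _ ef] := real_embP hf; have [j _ eg] := real_embP hg.
move: nz; rewrite ef eg e a0 b0 T0.
suff -> : wedge_form 0 0 0 i j = 0 by rewrite eqxx.
by rewrite /wedge_form /rel_log; ring.
Qed.

End CyclicQuartic.

Unset Implicit Arguments.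
Set Strict Implicit.

Theorem mainTheorem9 (L : splittingFieldType rat) (R : realType)
  (iota : {rmorphism L -> R})
  (HGal : galois 1%VS {:L})
  (Hcyc : cyclic 'Gal({:L} / 1%VS)%g)
  (Hord : #|'Gal({:L} / 1%VS)%g| = 4%N)
  (l : {subfield L}) (Hl : \dim l = 2%N)
  (ul : L) (Hul_l : ul \in l) (Hul_unit : OL_unit ul) (Hul_gt1 : 1 < iota ul)
  (Hul_fund : forall v : L, v \in l -> OL_unit v ->
      exists k : int, v = ul ^ k \/ v = - ul ^ k)
  (Hnorm : ~ exists u : L, OL_unit u /\
      (galNorm l {:L} u = ul \/ galNorm l {:L} u = - ul)) :
  forall w : (L -> R) -> (L -> R) -> R,
    wedge2_LOG_group w -> wedge_nonzero w ->
    8 * (ln ((1 + Num.sqrt 5) / 2)) ^+ 2 <= wedge_norm1 w.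
Proof.
move=> w hw hw0; have [s Gs] := cyclicP Hcyc.
have Hos : #[s]%g = 4%N by rewrite /order -Gs Hord.
exact: (wedge_norm1_ge HGal Gs Hos Hl Hul_l Hul_unit Hul_gt1 Hul_fund Hnorm hw hw0).
Qed.
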